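(* Let $(\mathfrak h\oplus\mathfrak h^*,[\cdot,\cdot],[\![\cdot,\cdot,\cdot]\!];\omega_p)$ be a phase space of a Lie-Yamaguti algebra $(\mathfrak h,[\cdot,\cdot]_{\mathfrak h},[\![\cdot,\cdot,\cdot]\!]_{\mathfrak h})$, and let $(\mathfrak h\oplus\mathfrak h^*,*,\{\cdot,\cdot,\cdot\})$ be its compatible pre-Lie-Yamaguti algebra, defined by $\omega_p(X*Y,Z)=-\omega_p(Y,[X,Z])$ and $\omega_p(\{X,Y,Z\},W)=\omega_p(X,[\![W,Z,Y]\!])$ for $X,Y,Z,W\in\mathfrak h\oplus\mathfrak h^*$. Then both $\mathfrak h$ and $\mathfrak h^*$ are closed under $*$ and $\{\cdot,\cdot,\cdot\}$, i.e. $(\mathfrak h,*|_{\mathfrak h},\{\cdot,\cdot,\cdot\}|_{\mathfrak h})$ and $(\mathfrak h^*,*|_{\mathfrak h^*},\{\cdot,\cdot,\cdot\}|_{\mathfrak h^*})$ are subalgebras of the pre-Lie-Yamaguti algebra $(\mathfrak h\oplus\mathfrak h^*,*,\{\cdot,\cdot,\cdot\})$.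
   Context: All vector spaces are over a field of characteristic $0$ and finite-dimensional. A Lie-Yamaguti algebra is a vector space $\mathfrak g$ with a bilinear skew-symmetric $[\cdot,\cdot]$ and a trilinear $[\![\cdot,\cdot,\cdot]\!]$ skew-symmetric in its first two arguments such that for all $x,y,z,w,t$: (1) $[[x,y],z]+[[y,z],x]+[[z,x],y]+[\![x,y,z]\!]+[\![y,z,x]\!]+[\![z,x,y]\!]=0$; (2) $[\![[x,y],z,w]\!]+[\![[y,z],x,w]\!]+[\![[z,x],y,w]\!]=0$; (3) $[\![x,y,[z,w]]\!]=[[\![x,y,z]\!],w]+[z,[\![x,y,w]\!]]$; (4) $[\![x,y,[\![z,w,t]\!]]\!]=[\![[\![x,y,z]\!],w,t]\!]+[\![z,[\![x,y,w]\!],t]\!]+[\![z,w,[\![x,y,t]\!]]\!]$. A symplectic structure on it is a nondegenerate skew-symmetric bilinear form $\omega$ with $\omega(x,[y,z])+\omega(y,[z,x])+\omega(z,[x,y])=0$ and $\omega(z,[\![x,y,w]\!])-\omega(x,[\![w,z,y]\!])+\omega(y,[\![w,z,x]\!])-\omega(w,[\![x,y,z]\!])=0$; for a symplectic Lie-Yamaguti algebra, the two displayed formulas define a pre-Lie-Yamaguti algebra structure whose subadjacent Lie-Yamaguti algebra is the given one (its compatible pre-Lie-Yamaguti algebra). On $\mathfrak h\oplus\mathfrak h^*$, $\omega_p(x+\alpha,y+\beta)=\langle\alpha,y\rangle-\langle\beta,x\rangle$. A phase space of $\mathfrak h$ is a Lie-Yamaguti algebra structure on $\mathfrak h\oplus\mathfrak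 h^*$ for which $\omega_p$ is a symplectic structure and such that $\mathfrak h$ (with its original brackets) and $\mathfrak h^*$ are Lie-Yamaguti subalgebras. A pre-Lie-Yamaguti algebra is a vector space with a bilinear operation $*$ and a trilinear operation $\{\cdot,\cdot,\cdot\}$ satisfying the pre-Lie-Yamaguti axioms; a subalgebra is a subspace closed under both operations. *)

From HB Require Import structures.
From mathcomp Require Import all_boot all_algebra.
Set Implicit Arguments. Unset Strict Implicit. Unset Printing Implicit Defensive.
Import GRing.Theory.
Local Open Scope ring_scope.

Section LY.
Variables (F : fieldType) (V : lmodType F).

Definition LY_multilinear (br : V -> V -> V) (tr : V -> V -> V -> V) : Prop :=
  (forall a x y z, br (a *: x + y) z = a *: br x z + br y z) /\
  (forall a x y z, br z (a *: x + y) = a *: br z x + br z y) /\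
  (forall a x y z w, tr (a *: x + y) z w = a *: tr x z w + tr y z w) /\
  (forall a x y z w, tr z (a *: x + y) w = a *: tr z x w + tr z y w) /\
  (forall a x y z w, tr z w (a *: x + y) = a *: tr z w x + tr z w y).

Definition LieYamaguti (br : V -> V -> V) (tr : V -> V -> V -> V) : Prop :=
  LY_multilinear br tr /\
  (forall x y, br x y = - br y x) /\
  (forall x y z, tr x y z = - tr y x z) /\
  [/\
      (forall x y z,
         br (br x y) z + br (br y z) x + br (br z x) y
         + tr x y z + tr y z x + tr z x y = 0),
      (forall x y z w,
         tr (br x y) z w + tr (br y z) x w + tr (br z x) y w = 0),
      (forall x y z w, tr x y (br z w) = br (tr x y z) w + br z (tr x y w)) &
      (forall x y z w t,
         tr x y (tr z w t) = tr (tr x y z) w t + tr z (tr x y w) t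
                             + tr z w (tr x y t))].

Definition symplectic (om : V -> V -> F)
    (br : V -> V -> V) (tr : V -> V -> V -> V) : Prop :=
  [/\ (forall a x y z, om (a *: x + y) z = a * om x z + om y z),
      (forall x y, om x y = - om y x),
      (forall x, (forall y, om x y = 0) -> x = 0),
      (forall x y z, om x (br y z) + om y (br z x) + om z (br x y) = 0) &
      (forall x y z w,
         om z (tr x y w) - om x (tr w z y) + om y (tr w z x)
         - om w (tr x y z) = 0)].
End LY.

(* h = F^n (row vectors), h^* = F^n with the standard pairing (dual basis);
   h (+) h^* is the product type 'rV_n * 'rV_n, h = {(x,0)}, h^* = {(0,a)}. *)
Definition pairing (F : fieldType) (n : nat) (a x : 'rV[F]_n) : F :=
  \sum_(i < n) a 0 i * x 0 i.

Definition omega_p (F : fieldType) (n : nat) (X Y : 'rV[F]_n * 'rV[F]_n) : F :=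
  pairing X.2 Y.1 - pairing Y.2 X.1.

Definition phase_space (F : fieldType) (n : nat)
    (brh : 'rV[F]_n -> 'rV[F]_n -> 'rV[F]_n)
    (trh : 'rV[F]_n -> 'rV[F]_n -> 'rV[F]_n -> 'rV[F]_n)
    (br : 'rV[F]_n * 'rV[F]_n -> 'rV[F]_n * 'rV[F]_n -> 'rV[F]_n * 'rV[F]_n)
    (tr : 'rV[F]_n * 'rV[F]_n -> 'rV[F]_n * 'rV[F]_n -> 'rV[F]_n * 'rV[F]_n
          -> 'rV[F]_n * 'rV[F]_n) : Prop :=
  LieYamaguti br tr /\
  symplectic (@omega_p F n) br tr /\
  [/\
      (forall x y, br (x, 0) (y, 0) = (brh x y, 0)),
      (forall x y z, tr (x, 0) (y, 0) (z, 0) = (trh x y z, 0)),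
      (forall a b, (br (0, a) (0, b)).1 = 0) &
      (forall a b c, (tr (0, a) (0, b) (0, c)).1 = 0)].

From mathcomp Require Import all_boot all_algebra.
Local Open Scope ring_scope.
Import GRing.Theory.
Set Implicit Arguments.
Unset Strict Implicit.

(* Both h and h^* are Lagrangian for omega_p (each is its own
   omega_p-orthogonal) and closed under both brackets.  Since * and {,,} are
   omega_p-adjoint to the brackets, omega_p (X * Y) Z with X, Y, Z in a
   Lagrangian subalgebra L is a pairing of two elements of L, hence 0; so
   X * Y lies in the orthogonal of L, which is L itself. *)

Definition lagrangian (R : zmodType) (V : Type) (om : V -> V -> R)
    (L : V -> Prop) : Prop :=
  forall U, L U <-> (forall Z, L Z -> om U Z = 0).

Section LagrangianSubalgebra.
Variables (R : zmodType) (V : Type) (om : V -> V -> R).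
Variables (br mul : V -> V -> V) (tr trp : V -> V -> V -> V).
Hypothesis mul_adjoint : forall X Y Z, om (mul X Y) Z = - om Y (br X Z).
Hypothesis trp_adjoint : forall X Y Z W, om (trp X Y Z) W = om X (tr W Z Y).
Variable L : V -> Prop.
Hypothesis L_lagrangian : lagrangian om L.

Lemma lagrangian_mul_closed :
  (forall X Z, L X -> L Z -> L (br X Z)) ->
  forall X Y, L X -> L Y -> L (mul X Y).
Proof.
move=> brL X Y LX LY; apply/L_lagrangian => Z LZ.
by rewrite mul_adjoint (proj1 (L_lagrangian Y) LY) ?oppr0 //; apply: brL.
Qed.

Lemma lagrangian_trp_closed :
  (forall X Y Z, L X -> L Y -> L Z -> L (tr X Y Z)) ->
  forall X Y Z, L X -> L Y -> L Z -> L (trp X Y Z).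
Proof.
move=> trL X Y Z LX LY LZ; apply/L_lagrangian => W LW.
by rewrite trp_adjoint (proj1 (L_lagrangian X) LX) //; apply: trL.
Qed.

End LagrangianSubalgebra.

Section Pairing.
Variables (F : fieldType) (n : nat).
Implicit Types a x : 'rV[F]_n.

Lemma pairing0l x : pairing 0 x = 0.
Proof. by rewrite /pairing big1 // => i _; rewrite mxE mul0r. Qed.

Lemma pairing0r a : pairing a 0 = 0.
Proof. by rewrite /pairing big1 // => i _; rewrite mxE mulr0. Qed.

Lemma pairingC a x : pairing a x = pairing x a.
Proof. by apply: eq_bigr => i _; rewrite mulrC. Qed.

Lemma pairing_delta a i : pairing a (delta_mx 0 i) = a 0 i.
Proof.
rewrite /pairing (bigD1 i) //= big1 ?addr0; first by rewrite mxE !eqxx mulr1.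
by move=> j /negbTE ji; rewrite mxE ji andbF mulr0.
Qed.

Lemma pairing_nondeg a : (forall x, pairing a x = 0) -> a = 0.
Proof. by move=> a0; apply/rowP => i; rewrite mxE -pairing_delta a0. Qed.

Lemma omega_p_lagrangian_h : lagrangian (@omega_p F n) (fun U => U.2 = 0).
Proof.
move=> [x a] /=; split=> [-> [z b] /= -> | isoU].
  by rewrite /omega_p /= !pairing0l subr0.
apply: pairing_nondeg => z; have := isoU (z, 0) erefl.
by rewrite /omega_p /= pairing0l subr0.
Qed.

Lemma omega_p_lagrangian_hdual :
  lagrangian (@omega_p F n) (fun U => U.1 = 0).
Proof.
move=> [x a] /=; split=> [-> [z b] /= -> | isoU].
  by rewrite /omega_p /= !pairing0r subr0.
apply: pairing_nondeg => c; have /eqP := isoU (0, c) erefl.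
by rewrite /omega_p /= pairing0r sub0r oppr_eq0 pairingC => /eqP.
Qed.

End Pairing.

Section PhaseSpace.
Variables (F : fieldType) (n : nat).
Variables (brh : 'rV[F]_n -> 'rV[F]_n -> 'rV[F]_n)
          (trh : 'rV[F]_n -> 'rV[F]_n -> 'rV[F]_n -> 'rV[F]_n).
Variables (br : 'rV[F]_n * 'rV[F]_n -> 'rV[F]_n * 'rV[F]_n -> 'rV[F]_n * 'rV[F]_n)
          (tr : 'rV[F]_n * 'rV[F]_n -> 'rV[F]_n * 'rV[F]_n -> 'rV[F]_n * 'rV[F]_n
                -> 'rV[F]_n * 'rV[F]_n).
Hypothesis phase : phase_space brh trh br tr.

Lemma phase_space_br_h X Z : X.2 = 0 -> Z.2 = 0 -> (br X Z).2 = 0.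
Proof.
case: phase => _ [_ [brE _ _ _]].
by case: X => x ? /= ->; case: Z => z ? /= ->; rewrite brE.
Qed.

Lemma phase_space_tr_h X Y Z :
  X.2 = 0 -> Y.2 = 0 -> Z.2 = 0 -> (tr X Y Z).2 = 0.
Proof.
case: phase => _ [_ [_ trE _ _]].
case: X => x ? /= ->; case: Y => y ? /= ->.
by case: Z => z ? /= ->; rewrite trE.
Qed.

Lemma phase_space_br_hdual X Z : X.1 = 0 -> Z.1 = 0 -> (br X Z).1 = 0.
Proof.
case: phase => _ [_ [_ _ brE _]].
by case: X => ? a /= ->; case: Z => ? b /= ->; rewrite brE.
Qed.

Lemma phase_space_tr_hdual X Y Z :
  X.1 = 0 -> Y.1 = 0 -> Z.1 = 0 -> (tr X Y Z).1 = 0.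
Proof.
case: phase => _ [_ [_ _ _ trE]].
case: X => ? a /= ->; case: Y => ? b /= ->.
by case: Z => ? c /= ->; rewrite trE.
Qed.

End PhaseSpace.

Theorem corollary4p8 (F : fieldType) (charF0 : [pchar F] =i pred0) (n : nat)
    (brh : 'rV[F]_n -> 'rV[F]_n -> 'rV[F]_n)
    (trh : 'rV[F]_n -> 'rV[F]_n -> 'rV[F]_n -> 'rV[F]_n)
    (br : 'rV[F]_n * 'rV[F]_n -> 'rV[F]_n * 'rV[F]_n -> 'rV[F]_n * 'rV[F]_n)
    (tr : 'rV[F]_n * 'rV[F]_n -> 'rV[F]_n * 'rV[F]_n -> 'rV[F]_n * 'rV[F]_n
          -> 'rV[F]_n * 'rV[F]_n)
    (mul : 'rV[F]_n * 'rV[F]_n -> 'rV[F]_n * 'rV[F]_n -> 'rV[F]_n * 'rV[F]_n)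
    (trp : 'rV[F]_n * 'rV[F]_n -> 'rV[F]_n * 'rV[F]_n -> 'rV[F]_n * 'rV[F]_n
           -> 'rV[F]_n * 'rV[F]_n) :
  LieYamaguti brh trh ->
  phase_space brh trh br tr ->
  (forall X Y Z, omega_p (mul X Y) Z = - omega_p Y (br X Z)) ->
  (forall X Y Z W, omega_p (trp X Y Z) W = omega_p X (tr W Z Y)) ->
  (forall x y, (mul (x, 0) (y, 0)).2 = 0) /\
  (forall x y z, (trp (x, 0) (y, 0) (z, 0)).2 = 0) /\
  (forall a b, (mul (0, a) (0, b)).1 = 0) /\
  (forall a b c, (trp (0, a) (0, b) (0, c)).1 = 0).
Proof.
move=> _ phase mulE trpE.
have h_lag := @omega_p_lagrangian_h F n.
have hdual_lag := @omega_p_lagrangian_hdual F n.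
split; [|split; [|split]] => [x y | x y z | a b | a b c].
- exact: (lagrangian_mul_closed mulE h_lag (phase_space_br_h phase)).
- exact: (lagrangian_trp_closed trpE h_lag (phase_space_tr_h phase)).
- exact: (lagrangian_mul_closed mulE hdual_lag (phase_space_br_hdual phase)).
- exact: (lagrangian_trp_closed trpE hdual_lag (phase_space_tr_hdual phase)).
Qed.
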